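(* For every constant $\beta>0$ and every sequence $x_{1:n}\in\mathcal X^n$ ($n\ge1$), $$R^\beta_S(x_{1:n}) \ge \mathrm{CL}_w(\mathcal A) - m\ln m + \sum_{j\in\mathcal A}\tfrac12\ln\frac{n_j}{2\pi} - \tfrac12\ln n - 0.45\,m - 0.43 .$$
   Context: Let $\mathcal X$ be a finite base alphabet with $D=|\mathcal X|$. For $x_{1:n}\in\mathcal X^n$, let $n_i$ be the number of occurrences of $i$ in $x_{1:n}$, $\mathcal A=\{x_1,\dots,x_n\}$, $m=|\mathcal A|$. For $0\le t\le n$ let $\mathcal A_t=\{x_1,\dots,x_t\}$ ($\mathcal A_0=\emptyset$), $m_t=|\mathcal A_t|$, $n^t_i$ the number of occurrences of $i$ in $x_{1:t}$. New-symbol weights: for each $t$ and $i\in\mathcal X\setminus\mathcal A_t$ a number $w^t_i>0$ with $\sum_{k\in\mathcal X\setminus\mathcal A_t}w^t_k\le 1$. For constant $\beta>0$, $S^\beta(x_{t+1}=i\mid x_{1:t})=n^t_i/(t+\beta)$ if $n^t_i>0$ and $\beta w^t_i/(t+\beta)$ if $n^t_i=0$, and $S^\beta(x_{1:n})=\prod_{t=0}^{n-1}S^\beta(x_{t+1}\mid x_{1:t})$. $\mathrm{CL}_w(\mathcal A):=\sum_{t\in\{0,\dots,n-1\}:\,x_{t+1}\notin\mathcal A_t}\ln(1/w^t_{x_{t+1}})$. Redundancy: $R^\beta_S(x_{1:n}):=\ln\big(n^{-n}\prod_{j\in\mathcal A}n_j^{n_j}\big)-\ln S^\beta(x_{1:n})$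 (the log of the maximum i.i.d. likelihood over $S^\beta(x_{1:n})$). Natural logarithms. *)

From Stdlib Require Import Reals Lra Lia Arith List.
Import ListNotations.
Open Scope R_scope.

(* Alphabet X = {0,...,D-1}; the sequence x_{1:n} is given by x : nat -> nat,
   with x_{t+1} = x t for t = 0..n-1. *)

Definition Rsum (N : nat) (f : nat -> R) : R :=
  fold_right Rplus 0 (map f (seq 0 N)).
Definition Rprod (N : nat) (f : nat -> R) : R :=
  fold_right Rmult 1 (map f (seq 0 N)).

(* n^t_i : number of occurrences of i in x_{1:t} = x 0, ..., x (t-1) *)
Definition cnt (x : nat -> nat) (t i : nat) : nat :=
  length (filter (fun s => Nat.eqb (x s) i) (seq 0 t)).

Definition inA (x : nat -> nat) (t i : nat) : bool := Nat.ltb 0 (cnt x t i).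

Definition msize (D : nat) (x : nat -> nat) (t : nat) : nat :=
  length (filter (fun j => inA x t j) (seq 0 D)).

(* S^beta(x_{t+1} = i | x_{1:t}) with weights w t i = w^t_i *)
Definition Scond (beta : R) (w : nat -> nat -> R) (x : nat -> nat) (t i : nat) : R :=
  if inA x t i then INR (cnt x t i) / (INR t + beta)
  else beta * w t i / (INR t + beta).

Definition Sprob (beta : R) (w : nat -> nat -> R) (x : nat -> nat) (n : nat) : R :=
  Rprod n (fun t => Scond beta w x t (x t)).

Definition CLw (w : nat -> nat -> R) (x : nat -> nat) (n : nat) : R :=
  Rsum n (fun t => if inA x t (x t) then 0 else ln (1 / w t (x t))).

Definition Redund (D : nat) (beta : R) (w : nat -> nat -> R) (x : nat -> nat) (n : nat) : R :=
  ln (/ (INR n ^ n) *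
      Rprod D (fun j => if inA x n j then INR (cnt x n j) ^ (cnt x n j) else 1))
  - ln (Sprob beta w x n).

(* Taking logarithms, with m = |A| and n_j the final counts,
     R = CL_w(A) - n ln n + sum_j n_j ln n_j - sum_j ln((n_j - 1)!)
         - m ln beta + sum_{t<n} ln (t + beta),
   because every repeated symbol contributes its current count (so symbol j
   contributes 1*2*...*(n_j - 1)) and every new symbol contributes beta w.
   The last sum is at least m ln beta + ln((n-1)!) - ln((m-1)!) (use
   t + beta >= beta for t < m and t + beta >= t otherwise).  All remaining
   log-factorials are then controlled by the Stirling-type bracket
     k ln k - k - (1/2) ln k + 3/4 <= ln((k-1)!) <= k ln k - k - (1/2) ln k + 1,
   obtained by telescoping from the bracket
     2/(2K+1) <= ln(K+1) - ln K <= (2K+1)/(2K(K+1)).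
   Stdlib's convention ln 0 = 0 lets the per-time sums run over all t. *)

From Stdlib Require Import Reals Lra Lia List.
From Coquelicot Require Import Coquelicot.
Open Scope R_scope.

Lemma ln_0 : ln 0 = 0.
Proof. unfold ln. destruct (Rlt_dec 0 0) as [h|h]; [exfalso; lra|reflexivity]. Qed.

Lemma le_of_deriv_nonneg (f f' : R -> R) (x : R) :
  0 < x ->
  (forall c, 0 <= c <= x -> derivable_pt_lim f c (f' c)) ->
  (forall c, 0 < c < x -> 0 <= f' c) ->
  f 0 <= f x.
Proof.
  intros hx hder hpos.
  destruct (MVT_cor2 f f' 0 x hx hder) as [c [Hc Hcx]].
  assert (0 <= f' c * (x - 0)) by (apply Rmult_le_pos; [apply hpos|]; lra).
  lra.
Qed.

Lemma ln1p_bounds (x : R) : 0 < x ->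
  2 * x / (2 + x) <= ln (1 + x) <= x * (2 + x) / (2 * (1 + x)).
Proof.
  intros hx. split.
  - pose (f := fun y => ln (1 + y) - 2 * y / (2 + y)).
    assert (H : f 0 <= f x).
    { apply (le_of_deriv_nonneg f (fun c => c ^ 2 / ((1 + c) * (2 + c) ^ 2))); auto.
      - intros c hc. apply is_derive_Reals. unfold f.
        auto_derive; [lra|]. field. lra.
      - intros c hc. apply Rdiv_le_0_compat; [nra|].
        apply Rmult_lt_0_compat; nra. }
    unfold f in H. replace (1 + 0) with 1 in H by ring. rewrite ln_1 in H. lra.
  - pose (f := fun y => y * (2 + y) / (2 * (1 + y)) - ln (1 + y)).
    assert (H : f 0 <= f x).
    { apply (le_of_deriv_nonneg f (fun c => c ^ 2 / (2 * (1 + c) ^ 2))); auto.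
      - intros c hc. apply is_derive_Reals. unfold f.
        auto_derive; [lra|]. field. lra.
      - intros c hc. apply Rdiv_le_0_compat; nra. }
    unfold f in H. replace (1 + 0) with 1 in H by ring. rewrite ln_1 in H. lra.
Qed.

Lemma ln_succ_diff_bounds (K : R) : 0 < K ->
  2 / (2 * K + 1) <= ln (K + 1) - ln K <= (2 * K + 1) / (2 * K * (K + 1)).
Proof.
  intros hK.
  assert (hinv : 0 < / K) by (apply Rinv_0_lt_compat; lra).
  replace (ln (K + 1) - ln K) with (ln (1 + / K))
    by (rewrite <- ln_div by lra; f_equal; field; lra).
  replace (2 / (2 * K + 1)) with (2 * / K / (2 + / K)) by (field; lra).
  replace ((2 * K + 1) / (2 * K * (K + 1)))
    with (/ K * (2 + / K) / (2 * (1 + / K))) by (field; lra).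
  now apply ln1p_bounds.
Qed.

Lemma fold_plus_acc (l : list R) (a : R) :
  fold_right Rplus a l = fold_right Rplus 0 l + a.
Proof. induction l; simpl; [lra|rewrite IHl; lra]. Qed.

Lemma fold_mult_acc (l : list R) (a : R) :
  fold_right Rmult a l = fold_right Rmult 1 l * a.
Proof. induction l; simpl; [lra|rewrite IHl; ring]. Qed.

Lemma Rsum_S (N : nat) (f : nat -> R) : Rsum (S N) f = Rsum N f + f N.
Proof.
  unfold Rsum. rewrite seq_S, map_app, fold_right_app. simpl.
  rewrite fold_plus_acc. f_equal; ring.
Qed.

Lemma Rprod_S (N : nat) (f : nat -> R) : Rprod (S N) f = Rprod N f * f N.
Proof.
  unfold Rprod. rewrite seq_S, map_app, fold_right_app. simpl.
  rewrite fold_mult_acc. f_equal; ring.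
Qed.

Lemma Rsum_ext (N : nat) (f g : nat -> R) :
  (forall i, (i < N)%nat -> f i = g i) -> Rsum N f = Rsum N g.
Proof. induction N; intros H; [reflexivity|]. rewrite !Rsum_S, IHN, H; auto. Qed.

Lemma Rsum_le (N : nat) (f g : nat -> R) :
  (forall i, (i < N)%nat -> f i <= g i) -> Rsum N f <= Rsum N g.
Proof.
  induction N; intros H; [unfold Rsum; simpl; lra|]. rewrite !Rsum_S.
  apply Rplus_le_compat; [apply IHN; auto|apply H; lia].
Qed.

Lemma Rsum_plus (N : nat) (f g : nat -> R) :
  Rsum N (fun i => f i + g i) = Rsum N f + Rsum N g.
Proof. induction N; [unfold Rsum; simpl; lra|]. rewrite !Rsum_S, IHN; ring. Qed.

Lemma Rsum_minus (N : nat) (f g : nat -> R) :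
  Rsum N (fun i => f i - g i) = Rsum N f - Rsum N g.
Proof. induction N; [unfold Rsum; simpl; lra|]. rewrite !Rsum_S, IHN; ring. Qed.

Lemma Rsum_mult_r (N : nat) (f : nat -> R) (c : R) :
  Rsum N (fun i => f i * c) = Rsum N f * c.
Proof. induction N; [unfold Rsum; simpl; lra|]. rewrite !Rsum_S, IHN; ring. Qed.

Lemma Rsum_const (N : nat) (c : R) : Rsum N (fun _ => c) = INR N * c.
Proof.
  induction N; [unfold Rsum; simpl; lra|]. rewrite Rsum_S, IHN, S_INR; ring.
Qed.

Lemma Rsum_update (N a : nat) (f g : nat -> R) : (a < N)%nat ->
  (forall j, (j < N)%nat -> j <> a -> g j = f j) ->
  Rsum N g = Rsum N f + (g a - f a).
Proof.
  induction N; intros ha H; [lia|]. rewrite !Rsum_S.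
  destruct (Nat.eq_dec a N) as [->|hne].
  - rewrite (Rsum_ext N g f); [ring|]. intros; apply H; lia.
  - rewrite IHN; [|lia|intros; apply H; lia]. rewrite (H N); [ring|lia|auto].
Qed.

Lemma Rsum_ge_first (N : nat) (f : nat -> R) : (1 <= N)%nat ->
  (forall i, (i < N)%nat -> 0 <= f i) -> f 0%nat <= Rsum N f.
Proof.
  intros hN H. induction N as [|[|N] IHN]; [lia| |].
  - rewrite Rsum_S. unfold Rsum; simpl; lra.
  - rewrite Rsum_S. assert (0 <= f (S N)) by (apply H; lia).
    assert (f 0%nat <= Rsum (S N) f) by (apply IHN; [lia|intros; apply H; lia]).
    lra.
Qed.

Lemma Rprod_pos (N : nat) (f : nat -> R) :
  (forall i, (i < N)%nat -> 0 < f i) -> 0 < Rprod N f.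
Proof.
  induction N; intros H; [unfold Rprod; simpl; lra|]. rewrite Rprod_S.
  apply Rmult_lt_0_compat; [apply IHN; intros; apply H; lia|apply H; lia].
Qed.

Lemma ln_Rprod (N : nat) (f : nat -> R) : (forall i, (i < N)%nat -> 0 < f i) ->
  ln (Rprod N f) = Rsum N (fun i => ln (f i)).
Proof.
  induction N; intros H; [unfold Rprod; simpl; apply ln_1|].
  rewrite Rprod_S, Rsum_S, ln_mult, IHN; auto.
  apply Rprod_pos; auto.
Qed.

(* lnfact k = ln 1 + ... + ln (k-1) = ln((k-1)!) for k >= 1 (and 0 for k = 0). *)
Definition lnfact (k : nat) : R := Rsum k (fun t => ln (INR t)).

(* Error of the Stirling approximation k ln k - k - (1/2) ln k of ln((k-1)!). *)
Definition stirling_gap (k : nat) : R :=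
  INR k * ln (INR k) - lnfact k - / 2 * ln (INR k) - INR k.

Lemma stirling_gap_step (k : nat) : (1 <= k)%nat ->
  0 <= stirling_gap (S k) - stirling_gap k <= / (4 * INR k) - / (4 * INR (S k)).
Proof.
  intros hk. set (K := INR k).
  assert (hK : 0 < K) by (apply lt_0_INR; lia).
  assert (EK : INR (S k) = K + 1) by apply S_INR.
  assert (Hstep : stirling_gap (S k) - stirling_gap k
                  = (K + / 2) * (ln (K + 1) - ln K) - 1).
  { unfold stirling_gap, lnfact. rewrite Rsum_S, EK. cbv beta. fold K. field. }
  rewrite Hstep, EK.
  destruct (ln_succ_diff_bounds K hK) as [d1 d2].
  assert (l1 : (K + / 2) * (2 / (2 * K + 1)) = 1) by (field; lra).
  assert (l2 : (K + / 2) * ((2 * K + 1) / (2 * K * (K + 1)))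
               = 1 + (/ (4 * K) - / (4 * (K + 1)))) by (field; lra).
  split.
  - assert ((K + / 2) * (2 / (2 * K + 1)) <= (K + / 2) * (ln (K + 1) - ln K))
      by (apply Rmult_le_compat_l; lra).
    lra.
  - assert ((K + / 2) * (ln (K + 1) - ln K)
            <= (K + / 2) * ((2 * K + 1) / (2 * K * (K + 1))))
      by (apply Rmult_le_compat_l; lra).
    lra.
Qed.

(* Telescoping from stirling_gap 1 = -1. *)
Lemma stirling_gap_bounds (k : nat) : (1 <= k)%nat ->
  -1 <= stirling_gap k <= -3/4 - / (4 * INR k).
Proof.
  intros hk. induction k as [|k IHk]; [lia|].
  destruct (Nat.eq_dec k 0) as [->|hk0].
  - unfold stirling_gap, lnfact. rewrite Rsum_S. unfold Rsum. simpl.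
    rewrite ln_0, ln_1. lra.
  - destruct (stirling_gap_step k) as [s1 s2]; [lia|].
    destruct IHk; [lia|]. lra.
Qed.

Lemma lnfact_upper (k : nat) :
  lnfact k <= INR k * ln (INR k) - INR k - / 2 * ln (INR k) + 1.
Proof.
  destruct k.
  - unfold lnfact, Rsum. simpl. rewrite ln_0. lra.
  - pose proof (stirling_gap_bounds (S k)) as H. unfold stirling_gap in H.
    destruct H; [lia|]. lra.
Qed.

Lemma lnfact_lower (k : nat) : (1 <= k)%nat ->
  INR k * ln (INR k) - INR k - / 2 * ln (INR k) + 3/4 <= lnfact k.
Proof.
  intros hk. pose proof (stirling_gap_bounds k hk) as H. unfold stirling_gap in H.
  assert (0 < / (4 * INR k))
    by (apply Rinv_0_lt_compat; assert (0 < INR k) by (apply lt_0_INR; lia); lra).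
  lra.
Qed.

(* Lower bound for the normalizers: sum_{t<N} ln(t + beta) >= M ln beta
   + ln((N-1)!) - ln((M-1)!), using t + beta >= beta below M and >= t above. *)
Lemma ln_normalizers_lower (beta : R) (M N : nat) :
  0 < beta -> (1 <= M)%nat -> (M <= N)%nat ->
  INR M * ln beta + lnfact N - lnfact M <= Rsum N (fun t => ln (INR t + beta)).
Proof.
  intros hb hM hMN. replace N with (M + (N - M))%nat by lia.
  induction (N - M)%nat as [|d IHd].
  - rewrite Nat.add_0_r, <- Rsum_const.
    assert (Rsum M (fun _ => ln beta) <= Rsum M (fun t => ln (INR t + beta))).
    { apply Rsum_le. intros i _. apply ln_le; auto. pose proof (pos_INR i). lra. }
    lra.
  - rewrite Nat.add_succ_r. unfold lnfact in *. rewrite !Rsum_S.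
    assert (ln (INR (M + d)) <= ln (INR (M + d) + beta))
      by (apply ln_le; [apply lt_0_INR; lia|lra]).
    lra.
Qed.

Lemma cnt_S (x : nat -> nat) (t i : nat) :
  cnt x (S t) i = (cnt x t i + (if Nat.eqb (x t) i then 1 else 0))%nat.
Proof.
  unfold cnt. rewrite seq_S, filter_app, length_app. simpl.
  destruct (Nat.eqb (x t) i); simpl; lia.
Qed.

Lemma cnt_S_other (x : nat -> nat) (t j : nat) : j <> x t -> cnt x (S t) j = cnt x t j.
Proof. intro h. rewrite cnt_S. destruct (Nat.eqb_spec (x t) j); [congruence|lia]. Qed.

Lemma inA_false (x : nat -> nat) (t i : nat) : inA x t i = false -> cnt x t i = 0%nat.
Proof. unfold inA. intro h. apply Nat.ltb_ge in h. lia. Qed.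

Lemma inA_true (x : nat -> nat) (t i : nat) : inA x t i = true -> (0 < cnt x t i)%nat.
Proof. unfold inA. intro h. now apply Nat.ltb_lt in h. Qed.

Lemma inA_S_self (x : nat -> nat) (t : nat) : inA x (S t) (x t) = true.
Proof. unfold inA. rewrite cnt_S, Nat.eqb_refl. apply Nat.ltb_lt. lia. Qed.

Lemma inA_S_other (x : nat -> nat) (t j : nat) : j <> x t -> inA x (S t) j = inA x t j.
Proof. intro h. unfold inA. now rewrite cnt_S_other. Qed.

Lemma msize_sum (D : nat) (x : nat -> nat) (t : nat) :
  INR (msize D x t) = Rsum D (fun j => if inA x t j then 1 else 0).
Proof.
  unfold msize. induction D; [reflexivity|].
  rewrite seq_S, filter_app, length_app, Rsum_S, plus_INR, IHD.
  simpl. destruct (inA x t D); simpl; lra.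
Qed.

Section AlphabetSums.
Variables (D n : nat) (x : nat -> nat).
Hypothesis hx : forall t, (t < n)%nat -> (x t < D)%nat.

Lemma alphabet_sum_telescope (F : nat -> nat -> R) :
  (forall j, F 0%nat j = 0) ->
  (forall s j, (s < n)%nat -> j <> x s -> F (S s) j = F s j) ->
  Rsum D (F n) = Rsum n (fun s => F (S s) (x s) - F s (x s)).
Proof.
  intros hF0 hF. assert (Hgen : forall t, (t <= n)%nat ->
    Rsum D (F t) = Rsum t (fun s => F (S s) (x s) - F s (x s))).
  { induction t; intros ht.
    - rewrite (Rsum_ext D _ (fun _ => 0)), Rsum_const; [unfold Rsum; simpl; ring|auto].
    - rewrite (Rsum_update D (x t) (F t) (F (S t))), IHt, Rsum_S;
        [ring|lia|apply hx; lia|].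
      intros j _ hj. apply hF; [lia|auto]. }
  now apply Hgen.
Qed.

Lemma counts_total : Rsum D (fun j => INR (cnt x n j)) = INR n.
Proof.
  rewrite (alphabet_sum_telescope (fun t j => INR (cnt x t j))).
  - rewrite (Rsum_ext n _ (fun _ => 1)), Rsum_const; [ring|].
    intros s _. rewrite cnt_S, Nat.eqb_refl, plus_INR. simpl. ring.
  - reflexivity.
  - intros s j _ hj. now rewrite cnt_S_other.
Qed.

Lemma msize_new_symbols :
  INR (msize D x n) = Rsum n (fun s => if inA x s (x s) then 0 else 1).
Proof.
  rewrite msize_sum, (alphabet_sum_telescope (fun t j => if inA x t j then 1 else 0)).
  - apply Rsum_ext. intros s _. rewrite inA_S_self. destruct (inA x s (x s)); ring.
  - reflexivity.
  - intros s j _ hj. now rewrite inA_S_other.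
Qed.

(* The counts read at successive occurrences of j multiply to (n_j - 1)!
   (a new symbol reads count 0, and ln 0 = 0). *)
Lemma lnfact_counts :
  Rsum D (fun j => lnfact (cnt x n j)) = Rsum n (fun s => ln (INR (cnt x s (x s)))).
Proof.
  rewrite (alphabet_sum_telescope (fun t j => lnfact (cnt x t j))).
  - apply Rsum_ext. intros s _.
    rewrite cnt_S, Nat.eqb_refl, Nat.add_1_r. unfold lnfact. rewrite Rsum_S. ring.
  - reflexivity.
  - intros s j _ hj. now rewrite cnt_S_other.
Qed.

(* 1 <= m <= n: the first symbol is new, and at most one symbol is new per step. *)
Lemma msize_range : (1 <= n)%nat -> (1 <= msize D x n <= n)%nat.
Proof.
  intros hn.
  assert (H01 : forall s, (s < n)%nat -> 0 <= (if inA x s (x s) then 0 else 1))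
    by (intros s _; destruct (inA x s (x s)); lra).
  split; apply INR_le; rewrite msize_new_symbols.
  - eapply Rle_trans; [|apply Rsum_ge_first; auto]. unfold inA, cnt. simpl. lra.
  - rewrite <- (Rmult_1_r (INR n)), <- Rsum_const.
    apply Rsum_le; intros s _; destruct (inA x s (x s)); lra.
Qed.

Lemma symbol_terms_lower :
  Rsum D (fun j => if inA x n j then / 2 * ln (INR (cnt x n j) / (2 * PI)) else 0)
  + INR n - INR (msize D x n)
  <= Rsum D (fun j => INR (cnt x n j) * ln (INR (cnt x n j)))
     - Rsum D (fun j => lnfact (cnt x n j)).
Proof.
  rewrite <- counts_total, msize_sum, <- Rsum_plus, <- !Rsum_minus.
  apply Rsum_le. intros j _. pose proof (lnfact_upper (cnt x n j)).
  destruct (inA x n j) eqn:E.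
  - assert (0 < INR (cnt x n j)) by apply lt_0_INR, (inA_true _ _ _ E).
    assert (H2pi : 1 < 2 * PI) by (pose proof PI_RGT_0; pose proof PI2_1; lra).
    assert (0 < ln (2 * PI)) by (rewrite <- ln_1; apply ln_increasing; lra).
    rewrite ln_div by lra. lra.
  - rewrite (inA_false _ _ _ E). unfold lnfact, Rsum. simpl. lra.
Qed.

End AlphabetSums.

Lemma ln_max_likelihood (D n : nat) (x : nat -> nat) : (1 <= n)%nat ->
  ln (/ (INR n ^ n) * Rprod D (fun j => if inA x n j then INR (cnt x n j) ^ (cnt x n j) else 1))
  = - (INR n * ln (INR n)) + Rsum D (fun j => INR (cnt x n j) * ln (INR (cnt x n j))).
Proof.
  intros hn. assert (Hn : 0 < INR n) by (apply lt_0_INR; lia).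
  assert (Hpos : forall j, (j < D)%nat ->
            0 < (if inA x n j then INR (cnt x n j) ^ (cnt x n j) else 1)).
  { intros j _. destruct (inA x n j) eqn:E; [|lra].
    apply pow_lt, lt_0_INR, (inA_true _ _ _ E). }
  rewrite ln_mult, ln_Rinv, ln_pow, ln_Rprod; auto;
    [|apply pow_lt; auto|apply Rinv_0_lt_compat, pow_lt; auto|apply Rprod_pos; auto].
  f_equal. apply Rsum_ext. intros j _. destruct (inA x n j) eqn:E.
  - apply ln_pow, lt_0_INR, (inA_true _ _ _ E).
  - rewrite (inA_false _ _ _ E), ln_1. simpl. ring.
Qed.

(* Logarithm of the estimator's probability: repeated symbols contribute
   their counts, new symbols beta w, and every step divides by t + beta. *)
Lemma ln_Sprob (D : nat) (beta : R) (w : nat -> nat -> R) (x : nat -> nat) (n : nat) :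
  0 < beta ->
  (forall t, (t < n)%nat -> (x t < D)%nat) ->
  (forall t i, (t < n)%nat -> (i < D)%nat -> inA x t i = false -> 0 < w t i) ->
  ln (Sprob beta w x n)
  = Rsum D (fun j => lnfact (cnt x n j)) + INR (msize D x n) * ln beta
    - CLw w x n - Rsum n (fun t => ln (INR t + beta)).
Proof.
  intros hbeta hx hwpos.
  assert (Hden : forall t, 0 < INR t + beta) by (intros t; pose proof (pos_INR t); lra).
  assert (Hterm : forall t, (t < n)%nat ->
    ln (Scond beta w x t (x t))
    = ln (INR (cnt x t (x t))) + (if inA x t (x t) then 0 else 1) * ln beta
      - (if inA x t (x t) then 0 else ln (1 / w t (x t))) - ln (INR t + beta)).
  { intros t ht. unfold Scond. destruct (inA x t (x t)) eqn:E.
    - rewrite ln_div; [ring|apply lt_0_INR, (inA_true _ _ _ E)|auto].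
    - assert (0 < w t (x t)) by (apply hwpos; auto).
      rewrite (inA_false _ _ _ E), INR_0, ln_0, ln_div, ln_mult, ln_div, ln_1;
        [ring|lra|auto|auto|auto|apply Rmult_lt_0_compat; auto|auto]. }
  assert (Hpos : forall t, (t < n)%nat -> 0 < Scond beta w x t (x t)).
  { intros t ht. unfold Scond. destruct (inA x t (x t)) eqn:E.
    - apply Rdiv_lt_0_compat; [apply lt_0_INR, (inA_true _ _ _ E)|auto].
    - apply Rdiv_lt_0_compat; [apply Rmult_lt_0_compat; auto|auto]. }
  unfold Sprob, CLw. rewrite ln_Rprod, (Rsum_ext n _ _ Hterm) by auto.
  rewrite !Rsum_minus, Rsum_plus, Rsum_mult_r.
  now rewrite (lnfact_counts D n x hx), (msize_new_symbols D n x hx).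
Qed.

Theorem theorem2 (D : nat) (beta : R) (w : nat -> nat -> R) (x : nat -> nat) (n : nat)
  (hbeta : 0 < beta)
  (hn : (1 <= n)%nat)
  (hx : forall t, (t < n)%nat -> (x t < D)%nat)
  (hwpos : forall t i, (t < n)%nat -> (i < D)%nat -> inA x t i = false -> 0 < w t i)
  (hwsum : forall t, (t < n)%nat ->
     Rsum D (fun k => if inA x t k then 0 else w t k) <= 1) :
  Redund D beta w x n >=
    CLw w x n
    - INR (msize D x n) * ln (INR (msize D x n))
    + Rsum D (fun j => if inA x n j then / 2 * ln (INR (cnt x n j) / (2 * PI)) else 0)
    - / 2 * ln (INR n)
    - 45 / 100 * INR (msize D x n)
    - 43 / 100.
Proof.
  unfold Redund. rewrite (ln_max_likelihood D n x hn), (ln_Sprob D beta w x n hbeta hx hwpos).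
  pose proof (symbol_terms_lower D n x hx) as Hsymbols.
  destruct (msize_range D n x hx hn) as [Hm1 Hmn].
  set (m := msize D x n) in *.
  pose proof (ln_normalizers_lower beta m n hbeta Hm1 Hmn) as Hnormalizers.
  pose proof (lnfact_lower n hn) as Hfact_n.
  pose proof (lnfact_upper m) as Hfact_m.
  assert (Hln_m : 0 <= ln (INR m))
    by (rewrite <- ln_1; apply ln_le; [lra|apply (le_INR 1); exact Hm1]).
  pose proof (pos_INR m).
  lra.
Qed.
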